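(* Let $\Gamma,\Gamma'$ be type environments, $H$ a heap and $R$ a register file with $\Gamma\le\Gamma'$ and $\mathrm{Cons}(H,R,\Gamma)$. Then: (1) for every $x\in dom(\Gamma')$ and every $a\in dom(H)$, $\mathrm{own}(H,R(x),\Gamma(x))(a)\ge\mathrm{own}(H,R(x),\Gamma'(x))(a)$; (2) for every $a\in dom(H)$, $\mathrm{Own}(H,R,\Gamma')(a)\le 1$; (3) for all types $\tau,\tau'$ and values $v$, if $\Gamma\vdash\tau\le\tau'$ and $\mathrm{SATv}(H,R,v,\tau)$ then $\mathrm{SATv}(H,R,v,\tau')$; (4) $\mathrm{SAT}(H,R,\Gamma')$; (5) $\mathrm{Cons}(H,R,\Gamma')$.
   Context: Refinement formulas are first-order formulas over integer program variables, integer literals, a value variable $\nu$, atomic predicates of a fixed theory and context-prefix predicates; $\models\psi$ means $\psi$ is valid. Types $\tau ::= \{\nu:\mathtt{int}\mid\varphi\}\mid\tau\ \mathtt{ref}^r$, $r\in[0,1]$ rational. Values: integers or addresses. Heap $H$: finite partial map addresses $\to$ values; register file $R$: finite partial map variables $\to$ values; type environment $\Gamma$: finite map variables $\to$ types. $[R]\varphi$: $[\emptyset]\varphi=\varphi$, $[R\{x\mapsto n\}]\varphi=[R][n/x]\varphi$ ($n$ integer), $[R\{x\mapsto a\}]\varphi=[R]\varphi$ ($a$ address). $[\![\Gamma]\!]$: conjunction of $[x/\nu]\varphi$ over $x$ with $\Gamma(x)=\{\nu:\mathtt{int}\mid\varphi\}$. Subtyping: $\Gamma\vdash\{\nu:\mathtt{int}\mid\varphi_1\}\le\{\nu:\mathtt{int}\mid\varphi_2\}$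 iff $\models[\![\Gamma]\!]\wedge\varphi_1\Rightarrow\varphi_2$; $\Gamma\vdash\tau_1\ \mathtt{ref}^{r_1}\le\tau_2\ \mathtt{ref}^{r_2}$ iff $r_1\ge r_2$ and $\Gamma\vdash\tau_1\le\tau_2$; $\Gamma\le\Gamma'$ iff for each $x\in dom(\Gamma')$, $x\in dom(\Gamma)$ and $\Gamma\vdash\Gamma(x)\le\Gamma'(x)$. $\mathrm{SATv}(H,R,v,\tau)$: for $\tau=\{\nu:\mathtt{int}\mid\varphi\}$, $v\in\mathbb Z$ and $\models[R][v/\nu]\varphi$; for $\tau=\tau'\ \mathtt{ref}^r$, $v=a\in dom(H)$ and $\mathrm{SATv}(H,R,H(a),\tau')$. $\mathrm{SAT}(H,R,\Gamma)$ iff every $x\in dom(\Gamma)$ is in $dom(R)$ and $\mathrm{SATv}(H,R,R(x),\Gamma(x))$. Ownership maps are functions from addresses to nonnegative rationals, added pointwise; $\{a\mapsto r\}$ maps $a$ to $r$ and all else to 0; $\emptyset$ is the zero map. $\mathrm{own}(H,v,\tau)=\{a\mapsto r\}+\mathrm{own}(H,H(a),\tau')$ if $v=a\in dom(H)$ and $\tau=\tau'\ \mathtt{ref}^r$, and $\emptyset$ otherwise. $\mathrm{Own}(H,R,\Gamma)=\sum_{x\in dom(\Gamma)}\mathrm{own}(H,R(x),\Gamma(x))$. $\mathrm{Cons}(H,R,\Gamma)$ iff $\mathrm{SAT}(H,R,\Gamma)$ and $\mathrm{Own}(H,R,\Gamma)(a)\le 1$ for all $a\in dom(H)$. *)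

From HB Require Import structures.
From mathcomp Require Import all_boot all_order all_algebra.
From mathcomp Require Import finmap.
Set Implicit Arguments.
Unset Strict Implicit.
Unset Printing Implicit Defensive.
Import Order.TTheory GRing.Theory Num.Theory.
Local Open Scope ring_scope.
Local Open Scope fset_scope.
Local Open Scope fmap_scope.

Definition var := nat.
Definition addr := nat.

Inductive fvar := Nu | PV of var.

(* Refinement formulas, shallowly embedded: a formula is its meaning,
   a predicate on integer valuations of the formula variables (the
   atomic predicates of the fixed theory are interpreted in its model). *)
Definition valuation := fvar -> int.
Definition formula := valuation -> Prop.

Definition valid (psi : formula) : Prop := forall rho : valuation, psi rho.

Definition upd (rho : valuation) (y : fvar) (n : int) : valuation :=
  fun z => match y, z with
           | Nu, Nu => n
           | PV x, PV x' => if x == x' then n else rho z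
           | _, _ => rho z
           end.

Definition subst_int (y : fvar) (n : int) (phi : formula) : formula :=
  fun rho => phi (upd rho y n).

Definition subst_nu_var (x : var) (phi : formula) : formula :=
  fun rho => phi (upd rho Nu (rho (PV x))).

Inductive value := VInt of int | VAddr of addr.

Definition heap := {fmap addr -> value}.
Definition regfile := {fmap var -> value}.

(* This is the meaning
   of the recursive definition [R{x|->n}]phi = [R][n/x]phi,
   [R{x|->a}]phi = [R]phi. *)
Definition subst_R (R : regfile) (phi : formula) : formula :=
  fun rho => phi (fun z => match z with
                           | PV x => match R.[? x] with
                                     | Some (VInt n) => n
                                     | _ => rho z
                                     end
                           | Nu => rho z
                           end).

Definition frac := {r : rat | (0 <= r) && (r <= 1)}.
Definition fracv (r : frac) : rat := proj1_sig r.

Inductive ty :=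
| TInt of formula
| TRef of ty & frac.

Definition tyenv := {fmap var -> ty}.

Definition env_formula (G : tyenv) : formula :=
  fun rho => forall (x : var) (phi : formula),
      G.[? x] = Some (TInt phi) -> subst_nu_var x phi rho.

Fixpoint subty (G : tyenv) (t1 t2 : ty) : Prop :=
  match t1, t2 with
  | TInt phi1, TInt phi2 =>
      valid (fun rho => env_formula G rho /\ phi1 rho -> phi2 rho)
  | TRef t1' r1, TRef t2' r2 => fracv r2 <= fracv r1 /\ subty G t1' t2'
  | _, _ => False
  end.

Definition subenv (G G' : tyenv) : Prop :=
  forall x t', G'.[? x] = Some t' ->
    exists t, G.[? x] = Some t /\ subty G t t'.

Fixpoint SATv (H : heap) (R : regfile) (v : value) (t : ty) : Prop :=
  match t with
  | TInt phi => exists n : int, v = VInt n /\ valid (subst_R R (subst_int Nu n phi))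
  | TRef t' _ => exists a : addr, v = VAddr a /\
                 exists w, H.[? a] = Some w /\ SATv H R w t'
  end.

Definition SAT (H : heap) (R : regfile) (G : tyenv) : Prop :=
  forall x t, G.[? x] = Some t -> exists v, R.[? x] = Some v /\ SATv H R v t.

Definition ownmap := addr -> rat.
Definition own_empty : ownmap := fun _ => 0.
Definition own_single (a : addr) (r : rat) : ownmap :=
  fun b => if b == a then r else 0.
Definition own_add (m1 m2 : ownmap) : ownmap := fun b => (m1 b + m2 b)%R.

Fixpoint own (H : heap) (v : value) (t : ty) : ownmap :=
  match v, t with
  | VAddr a, TRef t' r =>
      match H.[? a] with
      | Some w => own_add (own_single a (fracv r)) (own H w t')
      | None => own_empty
      end
  | _, _ => own_empty
  end.

Definition ownR (H : heap) (R : regfile) (x : var) (t : ty) : ownmap :=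
  match R.[? x] with
  | Some v => own H v t
  | None => own_empty
  end.

Definition Own (H : heap) (R : regfile) (G : tyenv) : ownmap :=
  fun a => \sum_(x <- domf G)
             match G.[? x] with
             | Some t => ownR H R x t a
             | None => 0
             end.

Definition Consistent (H : heap) (R : regfile) (G : tyenv) : Prop :=
  SAT H R G /\ forall a, a \in domf H -> Own H R G a <= 1.

(* Subtyping only lowers the fractions of reference types and weakens
   refinements.  Hence, variable by variable, Gamma' owns no more than Gamma,
   and a value satisfying a type satisfies each of its supertypes; for integer
   refinements the weakening is only valid under [[Gamma]], which holds at the
   valuation given by R because SAT(H,R,Gamma) makes every integer variable of
   Gamma satisfy its own refinement.  Since dom Gamma' is included in dom Gamma
   and ownership is nonnegative, summing the pointwise bound gives
   Own(H,R,Gamma') <= Own(H,R,Gamma) <= 1. *)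
From Pilot Require Import Defs.
From mathcomp Require Import all_boot all_order all_algebra.
From mathcomp Require Import finmap.
From Stdlib Require Import FunctionalExtensionality.
Import Order.TTheory GRing.Theory Num.Theory.
Local Open Scope ring_scope.
Local Open Scope fset_scope.
Local Open Scope fmap_scope.

(* [subst_R R phi rho] is [phi (regval R rho)] by conversion. *)
Definition regval (R : regfile) (rho : valuation) : valuation :=
  fun z => match z with
           | PV x => match R.[? x] with Some (VInt n) => n | _ => rho z end
           | Nu => rho z
           end.

Lemma upd_Nu_idem (rho : valuation) (n m : int) :
  upd (upd rho Nu n) Nu m = upd rho Nu m.
Proof. by apply: functional_extensionality => -[]. Qed.

Lemma fracv_ge0 (r : Defs.frac) : 0 <= fracv r.
Proof. by case: r => r /= /andP[]. Qed.

Lemma own_ge0 (H : heap) (v : value) (t : ty) (a : addr) : 0 <= own H v t a.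
Proof.
elim: t v => [phi|t IHt r] [n|b] //=; case: H.[? b] => [w|] //=.
by apply: addr_ge0 => //; rewrite /own_single; case: ifP => // _; apply: fracv_ge0.
Qed.

Lemma ownR_ge0 (H : heap) (R : regfile) (x : var) (t : ty) (a : addr) :
  0 <= ownR H R x t a.
Proof. by rewrite /ownR; case: R.[? x] => // v; apply: own_ge0. Qed.

Lemma own_subty (G : tyenv) (H : heap) (v : value) (t t' : ty) (a : addr) :
  subty G t t' -> own H v t' a <= own H v t a.
Proof.
elim: t t' v => [phi|t IHt r] [phi'|t' r'] [n|b] //= [le_r sub_t].
case: H.[? b] => [w|] //; apply: lerD; last exact: IHt.
by rewrite /own_single; case: ifP.
Qed.

Lemma ownR_subty (G : tyenv) (H : heap) (R : regfile) (x : var) (t t' : ty)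
    (a : addr) :
  subty G t t' -> ownR H R x t' a <= ownR H R x t a.
Proof. by rewrite /ownR => sub_t; case: R.[? x] => // v; apply: own_subty sub_t. Qed.

Section Satisfaction.

Context {G : tyenv} {H : heap} {R : regfile}.
Hypothesis satG : SAT H R G.

Lemma SAT_env_formula (rho : valuation) (n : int) :
  env_formula G (upd (regval R rho) Nu n).
Proof.
move=> x psi Gx; have [v [Rx [m [Ev sat_m]]]] := satG _ _ Gx.
by rewrite /subst_nu_var upd_Nu_idem /= Rx Ev; apply: sat_m.
Qed.

Lemma SATv_subty (t t' : ty) (v : value) :
  subty G t t' -> SATv H R v t -> SATv H R v t'.
Proof.
elim: t t' v => [phi|t IHt r] [phi'|t' r'] v //=.
- move=> sub_phi [n [-> sat_n]]; exists n; split=> // rho.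
  by apply: sub_phi; split; [apply: SAT_env_formula | apply: sat_n].
- move=> [_ sub_t] [b [-> [w [Hb sat_w]]]].
  by exists b; split=> //; exists w; split=> //; apply: IHt sat_w.
Qed.

End Satisfaction.

Section SubEnvironment.

Context {G G' : tyenv} {H : heap} {R : regfile}.
Hypothesis subG : subenv G G'.

Lemma ownR_subenv (x : var) (t t' : ty) (a : addr) :
  G'.[? x] = Some t' -> G.[? x] = Some t -> ownR H R x t' a <= ownR H R x t a.
Proof.
move=> /subG[t0 [-> sub_t0]] [<-]; exact: ownR_subty sub_t0.
Qed.

Lemma SAT_subenv : SAT H R G -> SAT H R G'.
Proof.
move=> satG x t' /subG[t [/satG[v [Rx sat_v]] sub_t]].
by exists v; split=> //; apply: SATv_subty sub_t sat_v.
Qed.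

Lemma domf_subenv : domf G' `<=` domf G.
Proof.
apply/fsubsetP=> x; rewrite -fndSome.
case G'x: G'.[? x] => [t'|] // _.
by have [t [Gx _]] := subG _ _ G'x; rewrite -fndSome Gx.
Qed.

Definition own_at (E : tyenv) (x : var) (a : addr) : rat :=
  match E.[? x] with Some t => ownR H R x t a | None => 0 end.

Lemma OwnE (E : tyenv) (a : addr) : Own H R E a = \sum_(x <- domf E) own_at E x a.
Proof. by []. Qed.

Lemma own_at_ge0 (E : tyenv) (x : var) (a : addr) : 0 <= own_at E x a.
Proof. by rewrite /own_at; case: E.[? x] => // t; apply: ownR_ge0. Qed.

Lemma own_at_subenv (x : var) (a : addr) : own_at G' x a <= own_at G x a.
Proof.
rewrite /own_at; case G'x: G'.[? x] => [t'|]; last exact: own_at_ge0.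
by have [t [Gx _]] := subG _ _ G'x; rewrite Gx; apply: ownR_subenv G'x Gx.
Qed.

(* Extending the sum for G' to dom G only adds zero terms. *)
Lemma Own_subenv (a : addr) : Own H R G' a <= Own H R G a.
Proof.
rewrite !OwnE (big_fset_incl _ domf_subenv) => [|x _ xG'].
  by apply: ler_sum => x _; apply: own_at_subenv.
by rewrite /own_at not_fnd.
Qed.

Lemma Consistent_subenv : Consistent H R G -> Consistent H R G'.
Proof.
move=> [satG ownG]; split; first exact: SAT_subenv.
by move=> a Ha; apply: le_trans (Own_subenv a) (ownG a Ha).
Qed.

End SubEnvironment.

Theorem lemma12 (G G' : tyenv) (H : heap) (R : regfile) :
  subenv G G' -> Consistent H R G ->
  (* (1) *)
  (forall (x : var) (t t' : ty), G'.[? x] = Some t' -> G.[? x] = Some t ->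
     forall a : addr, a \in domf H -> ownR H R x t' a <= ownR H R x t a) /\
  (* (2) *)
  (forall a : addr, a \in domf H -> Own H R G' a <= 1) /\
  (* (3) *)
  (forall (t t' : ty) (v : value), subty G t t' -> SATv H R v t -> SATv H R v t') /\
  (* (4) *)
  SAT H R G' /\
  (* (5) *)
  Consistent H R G'.
Proof.
move=> subG consG; have consG' := Consistent_subenv subG consG.
split; first by move=> x t t' G'x Gx a _; exact: ownR_subenv subG x t t' a G'x Gx.
split; first by case: consG'.
split; first by move=> t t' v; apply: SATv_subty; case: consG.
by split; first by case: consG'.
Qed.
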